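(* Every strategyproof and pairwise social choice correspondence satisfies WMON, WSMON, IUA, and WLOC.
   Context: Let $A$ be a finite set of alternatives; a preference profile $R$ assigns a strict total order $\succ_i$ on $A$ (viewed as a set of ordered pairs) to each voter $i$ of a finite non-empty electorate $N\subseteq\{1,2,\dots\}$; $\mathcal{R}^*(A)$ is the set of all profiles over all electorates. $g_R(x,y)=|\{i: x\succ_i y\}|-|\{i: y\succ_i x\}|$. An SCC is $f:\mathcal{R}^*(A)\to 2^A\setminus\{\emptyset\}$; it is pairwise if $f(R)=f(R')$ whenever $g_R=g_{R'}$. Fishburn's extension: for $X\ne Y$, $X\succ_i^F Y$ iff $x\succ_i y$ for all $x\in X\setminus Y,y\in Y$ and for all $x\in X,y\in Y\setminus X$. $f$ is strategyproof if there are no electorate $N$, voter $i\in N$, and profiles $R,R'$ on $N$ with $\succ_j=\succ'_j$ for $j\ne i$ and $f(R')\succ_i^F f(R)$. For $B\subseteq A$, $\succ_i|_B=\succ_i\cap B^2$. In the following, $R,R'$ are profiles on the same electorate $N$ and $i\in N$ with $\succ_j=\succ'_j$ for all $j\ne i$. WMON: for all $a,b\in A$, if $\succ'_i=\succ_i\setminus\{(b,a)\}\cup\{(a,b)\}$ and $a\in f(R)$, then $a\in f(R')$ or $b\in f(R')\setminus f(R)$. WSMON: if $a\notin f(R)$, $\succ_i|_{A\setminus\{a\}}=\succ'_i|_{A\setminus\{a\}}$, $a\succ_i z$ for all $z\ne a$, and $z\succ'_i a$ for all $z\ne a$, then $f(R)=f(R')$. IUA: if there is $B\subseteq A\setminus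 f(R)$ with $\succ_i\setminus\succ_i|_B=\succ'_i\setminus\succ'_i|_B$, then $f(R)=f(R')$. WLOC: if there is $B\subseteq A$ with $\succ_i\setminus\succ_i|_B=\succ'_i\setminus\succ'_i|_B$ and $B\cap f(R)=B\cap f(R')$, then $f(R)=f(R')$. *)

From HB Require Import structures.
From mathcomp Require Import all_boot all_order all_algebra.
From mathcomp Require Import finmap.
Set Implicit Arguments. Unset Strict Implicit. Unset Printing Implicit Defensive.



Section Defs.
Variable A : finType.

(* A preference is a set of ordered pairs; (x,y) \in r means x is preferred to y. *)
Definition strict_total_order (r : {set A * A}) : Prop :=
  [/\ forall x, (x, x) \notin r,
      forall x y z, (x, y) \in r -> (y, z) \in r -> (x, z) \in r
    & forall x y, x != y -> ((x, y) \in r) || ((y, x) \in r)].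

Definition profile (N : {fset nat}) (P : {ffun N -> {set A * A}}) : Prop :=
  [/\ N != fset0, (forall i : N, 0 < val i)%N & forall i : N, strict_total_order (P i)].

Definition corr := forall N : {fset nat}, {ffun N -> {set A * A}} -> {set A}.

Definition is_SCC (f : corr) : Prop :=
  forall (N : {fset nat}) (P : {ffun N -> {set A * A}}), profile P -> @f N P != set0.

Definition margin (N : {fset nat}) (P : {ffun N -> {set A * A}}) (x y : A) : int :=
  (#|[set i : N | (x, y) \in P i]|%:Z - #|[set i : N | (y, x) \in P i]|%:Z)%R.

Definition pairwise_scc (f : corr) : Prop :=
  forall (N : {fset nat}) (P : {ffun N -> {set A * A}}) (N' : {fset nat}) (P' : {ffun N' -> {set A * A}}),
    profile P -> profile P' -> (forall x y, margin P x y = margin P' x y) ->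
    f N P = f N' P'.

Definition fishburn (r : {set A * A}) (X Y : {set A}) : Prop :=
  [/\ X != Y,
      (forall x y, x \in X :\: Y -> y \in Y -> (x, y) \in r)
    & (forall x y, x \in X -> y \in Y :\: X -> (x, y) \in r)].

Definition ideviation (N : {fset nat}) (i : N) (P P' : {ffun N -> {set A * A}}) : Prop :=
  profile P /\ profile P' /\ (forall j : N, j != i -> P' j = P j).

Definition strategyproof (f : corr) : Prop :=
  forall (N : {fset nat}) (i : N) (P P' : {ffun N -> {set A * A}}),
    ideviation i P P' -> ~ fishburn (P i) (f N P') (f N P).

Definition restr (r : {set A * A}) (B : {set A}) : {set A * A} := r :&: setX B B.

Definition WMON (f : corr) : Prop :=
  forall (N : {fset nat}) (i : N) (P P' : {ffun N -> {set A * A}}) (a b : A),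
    ideviation i P P' ->
    P' i = (P i :\ (b, a)) :|: [set (a, b)] ->
    a \in f N P ->
    a \in f N P' \/ b \in f N P' :\: f N P.

Definition WSMON (f : corr) : Prop :=
  forall (N : {fset nat}) (i : N) (P P' : {ffun N -> {set A * A}}) (a : A),
    ideviation i P P' ->
    a \notin f N P ->
    restr (P i) (~: [set a]) = restr (P' i) (~: [set a]) ->
    (forall z, z != a -> (a, z) \in P i) ->
    (forall z, z != a -> (z, a) \in P' i) ->
    f N P = f N P'.

Definition IUA (f : corr) : Prop :=
  forall (N : {fset nat}) (i : N) (P P' : {ffun N -> {set A * A}}),
    ideviation i P P' ->
    (exists B : {set A}, B \subset ~: f N P /\
       P i :\: restr (P i) B = P' i :\: restr (P' i) B) ->
    f N P = f N P'.

Definition WLOC (f : corr) : Prop :=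
  forall (N : {fset nat}) (i : N) (P P' : {ffun N -> {set A * A}}),
    ideviation i P P' ->
    (exists B : {set A},
       P i :\: restr (P i) B = P' i :\: restr (P' i) B /\
       B :&: f N P = B :&: f N P') ->
    f N P = f N P'.

End Defs.

(* Adding to a profile R
   two fresh voters with preferences r and its reverse leaves the margins
   unchanged; if the first of them then switches to r', the margins move exactly
   as under voter i's switch from R_i to R'_i, provided r -> r' reverses the same
   pairs as R_i -> R'_i, in the same direction.  So strategyproofness rules out
   f(R') being a Fishburn improvement on f(R) for every such r, not only for R_i.
   Given a violation of one of the four axioms, take r to be R_i coarsened into
   levels: f(R') \ f(R) first, then f(R') /\ f(R), then f(R) \ f(R'), then the
   rest, ties broken by R_i.  Making f(R') a Fishburn improvement on f(R) for r
   is then automatic; the hypothesis of the axiom is what allows the few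
   alternatives it mentions to be placed so that every pair reversed by voter i
   stays inside one level, and r' is R'_i coarsened in the same way. *)

From HB Require Import structures.
From mathcomp Require Import all_boot all_order all_algebra.
From mathcomp Require Import finmap.
From mathcomp Require Import ring.
Set Implicit Arguments. Unset Strict Implicit. Unset Printing Implicit Defensive.
Import GRing.Theory.
Local Open Scope fset_scope.

Section Preferences.
Variable A : finType.
Implicit Types (r s : {set A * A}) (X Y B : {set A}) (lev : A -> nat).

Lemma strict_total_order_asym r x y : strict_total_order r -> (x, y) \in r -> (y, x) \notin r.
Proof.
case=> irr trans _ xy; apply/negP => /(trans _ _ _ xy).
by rewrite (negbTE (irr x)).
Qed.

Definition rev_rel r : {set A * A} := [set p | (p.2, p.1) \in r].

Lemma strict_total_order_rev r : strict_total_order r -> strict_total_order (rev_rel r).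
Proof.
case=> irr trans total; split=> [x|x y z|x y neq]; rewrite !inE //=.
- by move=> xy yz; apply: trans yz xy.
- by rewrite orbC; apply: total.
Qed.

Definition lex_level lev r : {set A * A} :=
  [set p | (lev p.1 < lev p.2)%N || (lev p.1 == lev p.2) && (p \in r)].

Lemma lex_level_lt lev r x y : (lev x < lev y)%N -> (x, y) \in lex_level lev r.
Proof. by rewrite inE => ->. Qed.

Lemma strict_total_order_lex_level lev r :
  strict_total_order r -> strict_total_order (lex_level lev r).
Proof.
case=> irr trans total; split=> [x|x y z|x y neq]; rewrite !inE /=.
- by rewrite ltnn eqxx (negbTE (irr x)).
- case/orP=> [lt_xy|/andP[/eqP-> xy]]; case/orP=> [lt_yz|/andP[/eqP<- yz]].
  + by rewrite (ltn_trans lt_xy lt_yz).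
  + by rewrite lt_xy.
  + by rewrite lt_yz.
  + by rewrite eqxx (trans _ _ _ xy yz) orbT.
- by case: ltngtP => //= _; apply: total.
Qed.

Definition margin1 r (x y : A) : int :=
  ((((x, y) \in r) : nat)%:Z - (((y, x) \in r) : nat)%:Z)%R.

Lemma margin1_rev r x y : margin1 (rev_rel r) x y = (- margin1 r x y)%R.
Proof. by rewrite /margin1 !inE opprB. Qed.

Definition reorders_like r r' s s' := forall p,
  ((p \in r') = (p \in r) /\ (p \in s') = (p \in s)) \/
  ((p \in r') = (p \in s') /\ (p \in r) = (p \in s)).

Lemma reorders_like_margin1 r r' s s' x y : reorders_like r r' s s' ->
  (margin1 r' x y - margin1 r x y = margin1 s' x y - margin1 s x y)%R.
Proof.
rewrite /margin1 => D.
by case: (D (x, y)) (D (y, x)) => -[-> ->] [[-> ->]|[-> ->]]; ring.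
Qed.

Lemma reorders_like_lex_level lev s s' :
  (forall x y, ((x, y) \in s') != ((x, y) \in s) -> lev x = lev y) ->
  reorders_like (lex_level lev s) (lex_level lev s') s s'.
Proof.
move=> same_lev [x y]; rewrite !inE /=.
have [eq_lev|neq_lev] := eqVneq (lev x) (lev y).
  by right; rewrite eq_lev ltnn.
have [eq_xy|/same_lev/eqP] := eqVneq ((x, y) \in s') ((x, y) \in s).
  by left; rewrite eq_xy.
by rewrite (negbTE neq_lev).
Qed.

Lemma reorders_like_lex_top_bottom lev lev' s s' a :
  strict_total_order s -> strict_total_order s' ->
  restr s (~: [set a]) = restr s' (~: [set a]) ->
  (forall z, z != a -> (a, z) \in s) -> (forall z, z != a -> (z, a) \in s') ->
  (forall z, z != a -> [/\ lev a < lev z, lev' z < lev' a & lev' z = lev z]%N) ->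
  reorders_like (lex_level lev s) (lex_level lev' s') s s'.
Proof.
move=> sto_s sto_s' eq_off_a top bot lev_a [x y]; rewrite !inE /=.
have [->|xa] := eqVneq x a; have [->|ya] := eqVneq y a.
- by right; rewrite !ltnn !eqxx.
- have [lt_a lt_a' _] := lev_a y ya.
  rewrite lt_a top // (leq_gtF (ltnW lt_a')) (gtn_eqF lt_a').
  by rewrite (negbTE (strict_total_order_asym sto_s' (bot y ya))); right.
- have [lt_a lt_a' _] := lev_a x xa.
  rewrite lt_a' bot // (leq_gtF (ltnW lt_a)) (gtn_eqF lt_a).
  by rewrite (negbTE (strict_total_order_asym sto_s (top x xa))); right.
- have /setP/(_ (x, y)) := eq_off_a; rewrite !inE /= xa ya !andbT => ->.
  by have [_ _ ->] := lev_a x xa; have [_ _ ->] := lev_a y ya; left.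
Qed.

Lemma changed_pair_restr r r' B x y :
  r :\: restr r B = r' :\: restr r' B ->
  ((x, y) \in r') != ((x, y) \in r) -> (x \in B) && (y \in B).
Proof.
move=> /setP/(_ (x, y)); rewrite !inE /=.
by case: (x \in B) (y \in B) => [] [] //=; rewrite ?andbF /= => ->; rewrite eqxx.
Qed.

Lemma swap_pair_id s a b : strict_total_order s -> a != b -> (b, a) \notin s ->
  (s :\ (b, a)) :|: [set (a, b)] = s.
Proof.
case=> _ _ total ab ba; have ab_in : (a, b) \in s.
  by move: (total a b ab); rewrite (negbTE ba) orbF.
apply/setP => p; rewrite !inE.
have [->|_] := eqVneq p (a, b); first by rewrite ab_in orbT.
by have [->|_] := eqVneq p (b, a); rewrite ?(negbTE ba) orbF.
Qed.

Lemma swap_pair_changed s a b x y :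
  ((x, y) \in (s :\ (b, a)) :|: [set (a, b)]) != ((x, y) \in s) ->
  (x \in [set a; b]) && (y \in [set a; b]).
Proof.
rewrite !inE; have [[-> ->]|_] := eqVneq (x, y) (a, b); first by rewrite !eqxx !orbT.
have [[-> ->]|_] := eqVneq (x, y) (b, a); first by rewrite !eqxx !orbT.
by rewrite /= orbF eqxx.
Qed.

(* Even values leave room to insert alternatives strictly between two blocks. *)
Definition fishburn_level X Y z : nat :=
  if z \in X then (if z \in Y then 4 else 2) else (if z \in Y then 6 else 8).

Lemma fishburn_level_lt X Y x y : x \in X -> y \in Y -> (x \notin Y) || (y \notin X) ->
  (fishburn_level X Y x < fishburn_level X Y y)%N.
Proof. by rewrite /fishburn_level => -> ->; case: (x \in Y); case: (y \in X). Qed.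

Lemma fishburn_lex_level lev r X Y : X != Y ->
  {in Y, lev =1 fishburn_level X Y} ->
  {in X, forall x, lev x <= fishburn_level X Y x}%N ->
  fishburn (lex_level lev r) X Y.
Proof.
move=> neq levY levX.
have lt_lev x y : x \in X -> y \in Y -> (x \notin Y) || (y \notin X) -> (lev x < lev y)%N.
  move=> xX yY xy; rewrite (levY y yY).
  exact: leq_ltn_trans (levX x xX) (fishburn_level_lt xX yY xy).
split=> // x y.
- by case/setDP=> xX xY yY; apply/lex_level_lt/lt_lev; rewrite ?xY.
- by move=> xX /setDP[yY yX]; apply/lex_level_lt/lt_lev; rewrite ?yX ?orbT.
Qed.

(* [a] and [b] share a level between the blocks [X :&: Y] and [Y :\: X], so the
   only tie that [r] decides is the one between them. *)
Lemma fishburn_lex_level_pair r X Y a b :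
  a \in Y -> a \notin X -> b \in X -> b \in Y -> (b, a) \in r ->
  fishburn (lex_level (fun z => if z \in [set a; b] then 5 else fishburn_level X Y z) r) X Y.
Proof.
move=> aY aX bX bY ba; set lev := fun z => _.
have levX x : x \in X -> (lev x <= 5)%N.
  by rewrite /lev /fishburn_level => ->; case: ifP => // _; case: ifP.
have levY y : y \in Y -> (4 <= lev y)%N.
  by rewrite /lev /fishburn_level => ->; case: ifP => // _; case: ifP.
have levXY x : x \in X -> x \notin [set a; b] -> (lev x <= 4)%N.
  by rewrite /lev /fishburn_level => -> /negbTE->; case: ifP.
have neq_a x : x \in X -> x != a by move=> xX; apply: contraNneq aX => <-.
split.
- by apply: contraNneq aX => ->.
- move=> x y /setDP[xX xY] yY; apply: lex_level_lt.
  have xb : x != b by apply: contraNneq xY => ->.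
  have -> : lev x = 2.
    by rewrite /lev !inE (negbTE (neq_a x xX)) (negbTE xb) /fishburn_level xX (negbTE xY).
  exact: leq_trans (levY y yY).
- move=> x y xX /setDP[yY yX].
  have yb : y != b by apply: contraNneq yX => ->.
  have [->|ya] := eqVneq y a.
    have [->|xb] := eqVneq x b; first by rewrite inE /lev !inE !eqxx orbT ba.
    apply: lex_level_lt; rewrite {2}/lev !inE eqxx /=.
    by apply: levXY; rewrite // !inE negb_or neq_a.
  apply: lex_level_lt; apply: leq_ltn_trans (levX x xX) _.
  by rewrite /lev !inE (negbTE ya) (negbTE yb) /fishburn_level (negbTE yX) yY.
Qed.

End Preferences.

Section Electorates.
Variable A : finType.
Implicit Types (N : {fset nat}) (r t : {set A * A}).

Lemma margin_sum N (P : {ffun N -> {set A * A}}) x y :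
  margin P x y = (\sum_(v : N) margin1 (P v) x y)%R.
Proof.
have card_bool (c : pred N) : #|[set v | c v]| = (\sum_v (c v : nat))%N.
  by rewrite -sum1dep_card big_mkcond.
rewrite /margin /margin1 sumrB !card_bool.
by rewrite !(big_morph Posz PoszD (erefl _)).
Qed.

Lemma margin_ideviation N (i : N) (P P' : {ffun N -> {set A * A}}) x y :
  (forall j : N, j != i -> P' j = P j) ->
  margin P' x y = (margin P x y + margin1 (P' i) x y - margin1 (P i) x y)%R.
Proof.
move=> dev; rewrite !margin_sum (bigD1 i) //= [in RHS](bigD1 i) //=.
rewrite (eq_bigr (fun v => margin1 (P v) x y)); last by move=> v /dev ->.
ring.
Qed.

Lemma notin_fset_gt_max N n : (\max_(m <- N) m < n)%N -> n \notin N.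
Proof.
apply: contraTN => nN; rewrite -leqNgt.
exact: (@leq_bigmax_seq _ _ xpredT id).
Qed.

Definition extend_pref N (P : {ffun N -> {set A * A}}) (j : nat) r t (n : nat) :=
  if (insub n : option N) is Some u then P u else if n == j then r else t.

Definition add_voters N (P : {ffun N -> {set A * A}}) (j k : nat) r t :
    {ffun N `|` [fset j; k] -> {set A * A}} :=
  [ffun v => extend_pref P j r t (val v)].

Lemma profile_add_voters N (P : {ffun N -> {set A * A}}) j k r t :
  profile P -> strict_total_order r -> strict_total_order t -> (0 < j)%N -> (0 < k)%N ->
  profile (add_voters P j k r t).
Proof.
case=> _ pos sto sto_r sto_t j_gt0 k_gt0; split.
- by apply/eqP => /fsetP/(_ j); rewrite in_fsetU in_fset2 eqxx orbT.
- case=> v /=; rewrite in_fsetU in_fset2 => /or3P[vN|/eqP->|/eqP->] //.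
  exact: (pos [` vN]).
- move=> v; rewrite ffunE /extend_pref; case: insubP => [u _ _|_]; first exact: sto.
  by case: eqP.
Qed.

Lemma margin_add_voters N (P : {ffun N -> {set A * A}}) j k r t x y :
  j \notin N -> k \notin N -> j != k ->
  margin (add_voters P j k r t) x y = (margin P x y + margin1 r x y + margin1 t x y)%R.
Proof.
move=> jN kN jk; set g := fun n => margin1 (extend_pref P j r t n) x y.
rewrite margin_sum (eq_bigr (fun v => g (val v))); last by move=> v _; rewrite ffunE.
rewrite -(big_seq_fsetE _ _ xpredT g) /=.
have perm_jk : perm_eq (N `|` [fset j; k]) (N ++ [:: j; k]).
  apply: uniq_perm; first exact: fset_uniq.
    by rewrite cat_uniq fset_uniq /= !inE (negbTE jN) (negbTE kN) jk.
  by move=> z; rewrite in_fsetU in_fset2 mem_cat !inE.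
rewrite (perm_big _ perm_jk) big_cat /= !big_cons big_nil addr0 addrA.
congr (_ + _ + _)%R.
- rewrite margin_sum (big_seq_fsetE _ N xpredT g) /=; apply: eq_bigr => v _.
  by rewrite /g /extend_pref valK.
- by rewrite /g /extend_pref insubN // eqxx.
- by rewrite /g /extend_pref insubN // ifN // eq_sym.
Qed.

Lemma ideviation_sym N (i : N) (P P' : {ffun N -> {set A * A}}) :
  ideviation i P P' -> ideviation i P' P.
Proof. by case=> PP [PP' dev]; split; [|split] => // j /dev ->. Qed.

End Electorates.

Section PairwiseStrategyproof.
Variables (A : finType) (f : corr A).
(* [N] would otherwise be implicit, being inferable from the profile. *)
Arguments f : clear implicits.
Hypotheses (f_pairwise : pairwise_scc f) (f_sp : strategyproof f).

Lemma no_simulated_manipulation (N : {fset nat}) (i : N) (P P' : {ffun N -> {set A * A}})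
    r r' :
  ideviation i P P' -> strict_total_order r -> strict_total_order r' ->
  reorders_like r r' (P i) (P' i) -> ~ fishburn r (f N P') (f N P).
Proof.
move=> [PP [PP' dev]] sto_r sto_r' like.
pose j := (\max_(n <- N) n).+1; pose k := j.+1.
have jN : j \notin N by apply: notin_fset_gt_max.
have kN : k \notin N by apply: notin_fset_gt_max; rewrite ltnW.
have jk : j != k by rewrite neq_ltn ltnSn.
have jNjk : j \in N `|` [fset j; k] by rewrite in_fsetU in_fset2 eqxx orbT.
pose Q := add_voters P j k r (rev_rel r).
pose Q' := add_voters P j k r' (rev_rel r).
have QQ : profile Q by apply: profile_add_voters => //; apply: strict_total_order_rev.
have QQ' : profile Q' by apply: profile_add_voters => //; apply: strict_total_order_rev.
have margin_Q x y : margin P x y = margin Q x y.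
  by rewrite /Q margin_add_voters // margin1_rev addrK.
have margin_Q' x y : margin P' x y = margin Q' x y.
  rewrite /Q' margin_add_voters // margin1_rev (margin_ideviation x y dev).
  by rewrite -addrA -(reorders_like_margin1 x y like) addrA.
have dev_j : ideviation [` jNjk] Q Q'.
  split=> //; split=> // v v_j; rewrite !ffunE /extend_pref.
  case: insubP => // _; case: eqP => // eq_j.
  by case/eqP: v_j; apply: val_inj.
have := f_sp dev_j.
rewrite -(f_pairwise PP QQ margin_Q) -(f_pairwise PP' QQ' margin_Q').
by rewrite ffunE /extend_pref insubN // eqxx.
Qed.

Lemma no_lex_level_manipulation (N : {fset nat}) (i : N) (P P' : {ffun N -> {set A * A}})
    lev lev' :
  ideviation i P P' ->
  reorders_like (lex_level lev (P i)) (lex_level lev' (P' i)) (P i) (P' i) ->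
  ~ fishburn (lex_level lev (P i)) (f N P') (f N P).
Proof.
move=> dev; have [[_ _ sto] [[_ _ sto'] _]] := dev.
by apply: no_simulated_manipulation => //; apply: strict_total_order_lex_level.
Qed.

Lemma pairwise_sp_IUA : IUA f.
Proof.
move=> N i P P' dev [B [B_out eq_off_B]].
have [//|neq] := eqVneq (f N P) (f N P'); exfalso.
have notB y : y \in f N P -> y \notin B.
  by move=> yY; apply: contraL yY => /(subsetP B_out); rewrite inE.
pose lev z := if z \in B then 0 else fishburn_level (f N P') (f N P) z.
apply: (no_lex_level_manipulation (lev := lev) (lev' := lev) dev).
  apply: reorders_like_lex_level => x y /(changed_pair_restr eq_off_B)/andP[xB yB].
  by rewrite /lev xB yB.
apply: fishburn_lex_level; first by rewrite eq_sym.
  by move=> y /notB yB; rewrite /lev (negbTE yB).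
by move=> x _; rewrite /lev; case: ifP.
Qed.

Lemma pairwise_sp_WLOC : WLOC f.
Proof.
move=> N i P P' dev [B [eq_off_B eq_on_B]].
have [//|neq] := eqVneq (f N P) (f N P'); exfalso.
have onB z : z \in B -> (z \in f N P) = (z \in f N P').
  by move=> zB; move/setP/(_ z): eq_on_B; rewrite !inE zB.
pose lev z := if z \in B then 4 else fishburn_level (f N P') (f N P) z.
apply: (no_lex_level_manipulation (lev := lev) (lev' := lev) dev).
  apply: reorders_like_lex_level => x y /(changed_pair_restr eq_off_B)/andP[xB yB].
  by rewrite /lev xB yB.
apply: fishburn_lex_level; first by rewrite eq_sym.
  by move=> y yY; rewrite /lev; case: ifP => // yB; rewrite /fishburn_level -onB // yY.
by move=> x xX; rewrite /lev; case: ifP => // xB; rewrite /fishburn_level xX onB // xX.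
Qed.

Lemma pairwise_sp_WSMON : WSMON f.
Proof.
move=> N i P P' a dev aY eq_off_a top bot.
have [[_ _ sto] [[_ _ sto'] _]] := dev.
have [//|neq] := eqVneq (f N P) (f N P'); exfalso.
pose lev z := if z == a then 0 else fishburn_level (f N P') (f N P) z.
pose lev' z := if z == a then 9 else fishburn_level (f N P') (f N P) z.
apply: (no_lex_level_manipulation (lev := lev) (lev' := lev') dev).
  apply: (reorders_like_lex_top_bottom (sto i) (sto' i) eq_off_a top bot) => z za.
  by rewrite /lev /lev' eqxx (negbTE za) /fishburn_level; split => //; do 2 case: ifP.
apply: fishburn_lex_level; first by rewrite eq_sym.
  by move=> y yY; rewrite /lev ifN //; apply: contraNneq aY => <-.
by move=> x _; rewrite /lev; case: ifP.
Qed.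

Lemma pairwise_sp_WMON : WMON f.
Proof.
move=> N i P P' a b dev P'iE aY.
have [[_ _ sto] [[_ _ sto'] dev_i]] := dev.
have ab : a != b.
  have [irr _ _] := sto' i.
  by apply: contraNneq (irr a) => ab; rewrite P'iE !inE -ab eqxx orbT.
have [ba|ba] := boolP ((b, a) \in P i); last first.
  left; suff -> : P' = P by [].
  apply/ffunP => v; have [->|vi] := eqVneq v i; last exact: dev_i.
  by rewrite P'iE (swap_pair_id (sto i) ab ba).
have [aY'|aY'] := boolP (a \in f N P'); first by left.
right; have [bY'|bY'] := boolP (b \in f N P'); last first.
  exfalso.
  pose lev z := if z \in [set a; b] then 0 else fishburn_level (f N P) (f N P') z.
  apply: (no_lex_level_manipulation (lev := lev) (lev' := lev) (ideviation_sym dev)).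
    apply: reorders_like_lex_level => x y.
    by rewrite eq_sym P'iE => /swap_pair_changed/andP[xab yab]; rewrite /lev xab yab.
  apply: fishburn_lex_level; first by apply: contraNneq aY' => <-.
    move=> y yY'; rewrite /lev ifN // !inE negb_or.
    by apply/andP; split; apply: contraTneq yY' => ->.
  by move=> x _; rewrite /lev; case: ifP.
have [bY|bY] := boolP (b \in f N P); last by rewrite inE bY bY'.
exfalso.
pose lev z := if z \in [set a; b] then 5 else fishburn_level (f N P') (f N P) z.
apply: (no_lex_level_manipulation (lev := lev) (lev' := lev) dev); last first.
  exact: fishburn_lex_level_pair.
apply: reorders_like_lex_level => x y.
by rewrite P'iE => /swap_pair_changed/andP[xab yab]; rewrite /lev xab yab.
Qed.

End PairwiseStrategyproof.

Theorem lemma4 (A : finType) (f : corr A) :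
  is_SCC f -> pairwise_scc f -> strategyproof f ->
  WMON f /\ WSMON f /\ IUA f /\ WLOC f.
Proof.
move=> _ f_pairwise f_sp; split; [|split; [|split]].
- exact: pairwise_sp_WMON f_pairwise f_sp.
- exact: pairwise_sp_WSMON f_pairwise f_sp.
- exact: pairwise_sp_IUA f_pairwise f_sp.
- exact: pairwise_sp_WLOC f_pairwise f_sp.
Qed.
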